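(* Let $R$ be a semi-graded ring, $J$ a semi-graded ideal of $R$ and $f:R\to R/J$ the canonical map. Then the functor $f^*:\mathsf{SGR}\text{-}R\to\mathsf{SGR}\text{-}R/J$ is left adjoint to $f_*:\mathsf{SGR}\text{-}R/J\to\mathsf{SGR}\text{-}R$; i.e. there are bijections $\mathrm{Hom}_{\mathsf{SGR}\text{-}R}(M,f_*(N))\cong\mathrm{Hom}_{\mathsf{SGR}\text{-}R/J}(f^*(M),N)$ natural in $M\in\mathsf{SGR}\text{-}R$ and $N\in\mathsf{SGR}\text{-}R/J$.
   Context: Rings are associative with $1$; modules are left modules. A ring $R$ is semi-graded (SG) if there are additive subgroups $R_n$ ($n\in\mathbb{Z}$) with $R=\bigoplus_n R_n$, $R_mR_n\subseteq\bigoplus_{k\le m+n}R_k$, and $1\in R_0$. An $R$-module $M$ is SG if $M=\bigoplus_nM_n$ (additive subgroups) with $R_mM_n\subseteq\bigoplus_{k\le m+n}M_k$ for $m\ge0$, $n\in\mathbb{Z}$; a homomorphism of SG modules is homogeneous if it maps $M_n$ into $N_n$. A submodule $N'$ is an SG submodule if $N'=\bigoplus_n(N'\cap M_n)$; then $M/N'$ is SG with $(M/N')_n=(M_n+N')/N'$. For $X\subseteq M$, $\langle X\rangle^{\mathsf{SG}}$ is the intersection of all SG submodules containing $X$. $\mathsf{SGR}\text{-}R$ is the category of SG $R$-modules and homogeneous $R$-homomorphisms. An SG ideal $J$ is a two-sided ideal that is an SG submodule of $R$; $R/J$ is SG with $(R/J)_n=(R_n+J)/J$. $f_*$ is restriction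 of scalars along $f$ (same semi-graduation, morphisms unchanged). $f^*(M)=M/\langle JM\rangle^{\mathsf{SG}}$, an SG $R/J$-module via $\overline a\cdot\overline m=\overline{am}$, and $f^*(\alpha)(\overline m)=\overline{\alpha(m)}$ for a morphism $\alpha$. *)

From HB Require Import structures.
From mathcomp Require Import all_boot all_order all_algebra.
From mathcomp Require Import generic_quotient ring_quotient.
From Stdlib Require Import ClassicalEpsilon.

Set Implicit Arguments.
Unset Strict Implicit.
Unset Printing Implicit Defensive.

Import GRing.Theory.
Local Open Scope ring_scope.
Local Open Scope quotient_scope.

Definition asb (P : Prop) : bool :=
  if excluded_middle_informative P then true else false.
Lemma asbP (P : Prop) : reflect P (asb P).
Proof. by rewrite /asb; case: excluded_middle_informative => h; constructor. Qed.

Section QuotGen.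
Variables (V : zmodType) (I : zmodClosed V).
Lemma piqP (x y : V) : (\pi x : Quotient.quot I) = \pi y <-> x - y \in I.
Proof.
by rewrite Quotient.idealrBE; split => [->|/eqP] //; rewrite eqxx.
Qed.
Lemma reprq (x : V) : repr (\pi x : Quotient.quot I) - x \in I.
Proof. by apply/piqP; rewrite reprK. Qed.
End QuotGen.

Definition is_subgroup (V : zmodType) (S : V -> Prop) : Prop :=
  S 0 /\ (forall x y, S x -> S y -> S (x - y)).

Definition is_dsum_of (V : zmodType) (S : V -> Prop) (A : int -> V -> Prop) : Prop :=
  [/\ forall n, is_subgroup (A n),
      forall x, S x <-> exists (s : seq int) (c : int -> V),
        [/\ uniq s, forall n, n \in s -> A n (c n) & x = \sum_(n <- s) c n]
    & forall (s : seq int) (c : int -> V), uniq s ->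
        (forall n, n \in s -> A n (c n)) -> \sum_(n <- s) c n = 0 ->
        forall n, n \in s -> c n = 0].

Definition sum_le (V : zmodType) (A : int -> V -> Prop) (N : int) (x : V) : Prop :=
  exists (s : seq int) (c : int -> V),
    (forall k, k \in s -> k <= N /\ A k (c k)) /\ x = \sum_(k <- s) c k.

Definition is_SGring (R : pzRingType) (g : int -> R -> Prop) : Prop :=
  [/\ is_dsum_of (fun _ => True) g,
      forall m n a b, g m a -> g n b -> sum_le g (m + n) (a * b)
    & g 0 1].

Definition is_SGmod (R : pzRingType) (g : int -> R -> Prop)
    (M : lmodType R) (gM : int -> M -> Prop) : Prop :=
  is_dsum_of (fun _ => True) gM /\
  (forall (m n : int) (r : R) (x : M), 0 <= m -> g m r -> gM n x ->
     sum_le gM (m + n) (r *: x)).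

Definition is_SGhom (R : pzRingType) (M N : lmodType R)
    (gM : int -> M -> Prop) (gN : int -> N -> Prop) (h : M -> N) : Prop :=
  [/\ forall x y, h (x + y) = h x + h y,
      forall (r : R) x, h (r *: x) = r *: h x
    & forall n x, gM n x -> gN n (h x)].

Definition is_submod (R : pzRingType) (M : lmodType R) (S : M -> Prop) : Prop :=
  is_subgroup S /\ (forall (r : R) x, S x -> S (r *: x)).

Definition is_SGsubmod (R : pzRingType) (M : lmodType R)
    (gM : int -> M -> Prop) (S : M -> Prop) : Prop :=
  is_submod S /\ is_dsum_of S (fun n x => S x /\ gM n x).

Definition SGspan (R : pzRingType) (M : lmodType R)
    (gM : int -> M -> Prop) (X : M -> Prop) : M -> Prop :=
  fun x => forall S, is_SGsubmod gM S -> (forall y, X y -> S y) -> S x.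

Definition is_ideal (R : pzRingType) (J : R -> Prop) : Prop :=
  [/\ is_subgroup J, forall r x, J x -> J (r * x) & forall r x, J x -> J (x * r)].

Definition is_SGideal (R : pzRingType) (g : int -> R -> Prop) (J : R -> Prop) : Prop :=
  is_ideal J /\ is_dsum_of J (fun n x => J x /\ g n x).

Lemma SGideal_ideal (R : pzRingType) (g : int -> R -> Prop) (J : R -> Prop) :
  is_SGideal g J -> is_ideal J.
Proof. by case. Qed.

Section QuotRing.
Variables (R : pzRingType) (J : R -> Prop) (hJ : is_ideal J).

Definition Jb : {pred R} := fun x => asb (J x).

Lemma Jb_zmod : zmod_closed Jb.
Proof.
case: hJ => [[J0 JB] _ _]; split; first by apply/asbP.
by move=> x y /asbP Jx /asbP Jy; apply/asbP; apply: JB.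
Qed.

HB.instance Definition _ := GRing.isZmodClosed.Build R Jb Jb_zmod.

Definition quotR : Type := Quotient.quot Jb.
HB.instance Definition _ := GRing.Zmodule.on quotR.

Definition piR (a : R) : quotR := \pi a.
Definition reprR (x : quotR) : R := repr (x : Quotient.quot Jb).

Lemma piR_reprK x : piR (reprR x) = x. Proof. exact: reprK. Qed.
Lemma piRP a b : piR a = piR b <-> J (a - b).
Proof. by rewrite /piR piqP; split => /asbP. Qed.
Lemma piRD a b : piR (a + b) = piR a + piR b.
Proof. by rewrite /piR !piE. Qed.

Definition qmul (x y : quotR) : quotR := piR (reprR x * reprR y).
Definition qone : quotR := piR 1.

Lemma piRM a b : piR (a * b) = qmul (piR a) (piR b).
Proof.
rewrite /qmul; apply/piRP.
have ha : J (reprR (piR a) - a) by apply/piRP; rewrite piR_reprK.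
have hb : J (reprR (piR b) - b) by apply/piRP; rewrite piR_reprK.
set a' := reprR (piR a) in ha *; set b' := reprR (piR b) in hb *.
have -> : a * b - a' * b' = - ((a' - a) * b' + a * (b' - b)).
  by rewrite mulrBl mulrBr addrA subrK opprB.
case: hJ => [[J0 JB] JL JR].
have JN : forall x, J x -> J (- x) by move=> x Jx; rewrite -sub0r; apply: JB.
have JD : forall x y, J x -> J y -> J (x + y).
  by move=> x y Jx Jy; rewrite -[y]opprK; apply: JB => //; apply: JN.
by apply: JN; apply: JD; [apply: JR | apply: JL].
Qed.

Lemma qmulA : associative qmul.
Proof.
move=> x y z; rewrite -[x]piR_reprK -[y]piR_reprK -[z]piR_reprK.
by rewrite -!piRM mulrA.
Qed.
Lemma qmul1 : left_id qone qmul.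
Proof. by move=> x; rewrite -[x]piR_reprK -piRM mul1r. Qed.
Lemma qmulr1 : right_id qone qmul.
Proof. by move=> x; rewrite -[x]piR_reprK -piRM mulr1. Qed.
Lemma qmulDl : left_distributive qmul +%R.
Proof.
move=> x y z; rewrite -[x]piR_reprK -[y]piR_reprK -[z]piR_reprK.
by rewrite -piRD -!piRM mulrDl piRD.
Qed.
Lemma qmulDr : right_distributive qmul +%R.
Proof.
move=> x y z; rewrite -[x]piR_reprK -[y]piR_reprK -[z]piR_reprK.
by rewrite -piRD -!piRM mulrDr piRD.
Qed.

HB.instance Definition _ :=
  GRing.Zmodule_isPzRing.Build quotR qmulA qmul1 qmulr1 qmulDl qmulDr.

Definition quotR_grading (g : int -> R -> Prop) : int -> quotR -> Prop :=
  fun n y => exists r, g n r /\ piR r = y.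

End QuotRing.

Lemma subgroupD (V : zmodType) (S : V -> Prop) :
  is_subgroup S -> forall x y, S x -> S y -> S (x + y).
Proof.
move=> [S0 SB] x y Sx Sy; rewrite -[y]opprK -[- y]sub0r.
exact: SB _ _ Sx (SB _ _ S0 Sy).
Qed.

Section Fstar.
Variables (R : pzRingType) (J : R -> Prop) (hJ : is_ideal J).
Variables (M : lmodType R) (gM : int -> M -> Prop).

(* JM (its generators a m with a in J; SG submodules are submodules) *)
Definition JM : M -> Prop := fun y => exists a m, J a /\ y = a *: m.

Definition Kset : M -> Prop := SGspan gM JM.
Definition Kb : {pred M} := fun x => asb (Kset x).

Lemma Kb_zmod : zmod_closed Kb.
Proof.
split; first by apply/asbP => S [[[S0 _] _] _] _.
move=> x y /asbP Kx /asbP Ky; apply/asbP => S hS XS.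
case: (hS) => [[[_ SB] _] _]; apply: SB; [exact: Kx | exact: Ky].
Qed.

HB.instance Definition _ := GRing.isZmodClosed.Build M Kb Kb_zmod.

Definition fstar : Type := Quotient.quot Kb.
HB.instance Definition _ := GRing.Zmodule.on fstar.

Definition piM (m : M) : fstar := \pi m.
Definition reprM (x : fstar) : M := repr (x : Quotient.quot Kb).

Lemma piM_reprK x : piM (reprM x) = x. Proof. exact: reprK. Qed.
Lemma piMP a b : piM a = piM b <-> Kset (a - b).
Proof. by rewrite /piM piqP; split => /asbP. Qed.
Lemma piMD a b : piM (a + b) = piM a + piM b.
Proof. by rewrite /piM !piE. Qed.

Lemma Kset_scale (r : R) x : Kset x -> Kset (r *: x).
Proof. by move=> Kx S hS XS; case: (hS) => [[_ SZ] _]; apply: SZ; apply: Kx. Qed.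
Lemma Kset_JM y : JM y -> Kset y.
Proof. by move=> Xy S _ XS; apply: XS. Qed.
Lemma Kset_sub : is_subgroup Kset.
Proof.
split; first by move=> S [[[S0 _] _] _] _.
move=> x y Kx Ky S hS XS.
case: (hS) => [[[_ SB] _] _]; apply: SB; [exact: Kx | exact: Ky].
Qed.

Definition fscale (a : quotR hJ) (x : fstar) : fstar := piM (reprR a *: reprM x).

Lemma piMZ (a : R) (m : M) : piM (a *: m) = fscale (piR hJ a) (piM m).
Proof.
rewrite /fscale; apply/piMP.
have ha : J (reprR (piR hJ a) - a) by apply/piRP; rewrite piR_reprK.
have hm : Kset (reprM (piM m) - m) by apply/piMP; rewrite piM_reprK.
set a' := reprR (piR hJ a) in ha *; set m' := reprM (piM m) in hm *.
have -> : a *: m - a' *: m' = - ((a' - a) *: m' + a *: (m' - m)).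
  by rewrite scalerBl scalerBr addrA subrK opprB.
have [K0 KB] := Kset_sub.
have X1 : Kset ((a' - a) *: m') by apply: Kset_JM; exists (a' - a), m'.
have X2 : Kset (a *: (m' - m)) by apply: Kset_scale.
rewrite -sub0r; exact: (KB _ _ K0 (subgroupD Kset_sub X1 X2)).
Qed.

Lemma piR_surj (a : quotR hJ) : exists a0, a = piR hJ a0.
Proof. by exists (reprR a); rewrite piR_reprK. Qed.
Lemma piM_surj (x : fstar) : exists m, x = piM m.
Proof. by exists (reprM x); rewrite piM_reprK. Qed.

Lemma fscaleA a b v : fscale a (fscale b v) = fscale (a * b) v.
Proof.
have [a0 ->] := piR_surj a; have [b0 ->] := piR_surj b.
have [v0 ->] := piM_surj v.
rewrite -!piMZ scalerA; apply/piMP; rewrite -scalerBl; apply: Kset_JM.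
by exists (a0 * b0 - reprR (piR hJ a0) * reprR (piR hJ b0)), v0; split => //; apply/piRP; rewrite piRM.
Qed.
Lemma fscale1 : left_id 1 fscale.
Proof. by move=> v; have [v0 ->] := piM_surj v; rewrite -[1]/(piR hJ 1) -piMZ scale1r. Qed.
Lemma fscaleDr : right_distributive fscale +%R.
Proof.
move=> a u v; have [a0 ->] := piR_surj a.
have [u0 ->] := piM_surj u; have [v0 ->] := piM_surj v.
by rewrite -piMD -!piMZ scalerDr piMD.
Qed.
Lemma fscaleDl v : {morph fscale^~ v : a b / a + b}.
Proof.
move=> a b; have [a0 ->] := piR_surj a; have [b0 ->] := piR_surj b.
have [v0 ->] := piM_surj v.
by rewrite /= -piRD -!piMZ scalerDl piMD.
Qed.

HB.instance Definition _ :=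
  GRing.Zmodule_isLmodule.Build (quotR hJ) fstar fscaleA fscale1 fscaleDr fscaleDl.

Definition fstar_grading : int -> fstar -> Prop :=
  fun n y => exists m, gM n m /\ piM m = y.

End Fstar.

Arguments fstar {R} J {M} gM.
Arguments piM {R J M gM}.
Arguments reprM {R J M gM}.
Arguments fstar_grading {R} J {M} gM.

Definition fstar_hom (R : pzRingType) (J : R -> Prop)
    (M M' : lmodType R) (gM : int -> M -> Prop) (gM' : int -> M' -> Prop)
    (alpha : M -> M') : fstar J gM -> fstar J gM' :=
  fun y => piM (alpha (reprM y)).

Section Fpush.
Variables (R : pzRingType) (J : R -> Prop) (hJ : is_ideal J).
Variable (N : lmodType (quotR hJ)).

Definition fpush : Type := N.
HB.instance Definition _ := GRing.Zmodule.on fpush.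

Definition pscale (r : R) (x : fpush) : fpush := (piR hJ r : quotR hJ) *: (x : N).

Lemma pscaleA a b v : pscale a (pscale b v) = pscale (a * b) v.
Proof. by rewrite /pscale scalerA piRM. Qed.
Lemma pscale1 : left_id 1 pscale.
Proof. by move=> v; rewrite /pscale -[piR hJ 1]/(1 : quotR hJ) scale1r. Qed.
Lemma pscaleDr : right_distributive pscale +%R.
Proof. by move=> a u v; rewrite /pscale scalerDr. Qed.
Lemma pscaleDl v : {morph pscale^~ v : a b / a + b}.
Proof. by move=> a b; rewrite /pscale piRD scalerDl. Qed.

HB.instance Definition _ :=
  GRing.Zmodule_isLmodule.Build R fpush pscaleA pscale1 pscaleDr pscaleDl.

End Fpush.

Arguments fpush {R J hJ} N.

Arguments quotR_grading {R J} hJ g.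
Arguments fstar_hom {R} J {M M'} gM gM' alpha.

From HB Require Import structures.
From mathcomp Require Import all_boot all_order all_algebra.
From Stdlib Require Import FunctionalExtensionality.
Set Implicit Arguments.
Unset Strict Implicit.

Import GRing.Theory.
Local Open Scope ring_scope.

(* The kernel of a homogeneous homomorphism is an SG submodule, so a
   homogeneous R-homomorphism h : M -> f_*(N) vanishes on <JM>^SG as soon as
   it vanishes on JM, which it does because J acts by zero on f_*(N).  Hence h
   factors through f^*(M) = M / <JM>^SG; this factorisation is the adjunction
   bijection, with inverse given by precomposing with the projection. *)

Section AdditiveFun.
Variables (U V : zmodType) (h : U -> V).
Hypothesis hD : forall x y, h (x + y) = h x + h y.

Lemma additive_fun0 : h 0 = 0.
Proof. by apply: (@addrI _ (h 0)); rewrite -hD !addr0. Qed.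

Lemma additive_funB x y : h (x - y) = h x - h y.
Proof. by apply: (@addIr _ (h y)); rewrite -hD !subrK. Qed.

Lemma additive_fun_sum (s : seq int) (c : int -> U) :
  h (\sum_(n <- s) c n) = \sum_(n <- s) h (c n).
Proof. exact: (big_morph h hD additive_fun0). Qed.

End AdditiveFun.

Section SGhomKernel.
Variables (R : pzRingType) (M N : lmodType R).
Variables (gM : int -> M -> Prop) (gN : int -> N -> Prop) (h : M -> N).
Hypotheses (dsM : is_dsum_of (fun _ => True) gM)
           (dsN : is_dsum_of (fun _ => True) gN).
Hypothesis hSG : is_SGhom gM gN h.

Lemma SGhom_kernel_submod : is_submod (fun x => h x = 0).
Proof.
have [hD hZ _] := hSG.
split; first split.
- exact: additive_fun0.
- by move=> x y hx hy; rewrite additive_funB // hx hy subrr.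
- by move=> r x hx; rewrite hZ hx scaler0.
Qed.

(* The homogeneous components of an element of the kernel lie in the kernel:
   their images are homogeneous of distinct degrees and sum to 0 in N. *)
Lemma SGhom_kernel_SGsubmod : is_SGsubmod gM (fun x => h x = 0).
Proof.
have [hD _ hG] := hSG.
have [subM decM uniqM] := dsM; have [_ _ uniqN] := dsN.
have [[K0 KB] _] := SGhom_kernel_submod.
split; first exact: SGhom_kernel_submod.
split.
- move=> n; have [gM0 gMB] := subM n.
  split; first by split.
  by move=> x y [hx gx] [hy gy]; split; [apply: KB | apply: gMB].
- move=> x; split=> [hx | [s [c [us sc ->]]]].
    have [s [c [us sc ex]]] := (decM x).1 I.
    exists s, c; split=> // n ns; split; last exact: sc.
    apply: (uniqN s (h \o c) us _ _ n ns) => [m ms|]; first exact/hG/sc.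
    by rewrite -(additive_fun_sum hD) -ex.
  by rewrite additive_fun_sum // big1_seq // => n /andP[_ /sc[]].
- by move=> s c us sc; apply: uniqM => // n /sc[].
Qed.

End SGhomKernel.

Lemma piR_eq0 (R : pzRingType) (J : R -> Prop) (hJ : is_ideal J) (a : R) :
  J a -> piR hJ a = 0.
Proof.
by move=> Ja; rewrite -(additive_fun0 (piRD hJ)); apply/piRP; rewrite subr0.
Qed.

Section FstarFactor.
Variables (R : pzRingType) (J : R -> Prop) (hJ : is_ideal J).
Variables (M : lmodType R) (gM : int -> M -> Prop).
Variables (N : lmodType (quotR hJ)) (gN : int -> N -> Prop).
Hypotheses (dsM : is_dsum_of (fun _ => True) gM)
           (dsN : is_dsum_of (fun _ => True) gN).

Definition fstar_factor (h : M -> fpush N) : fstar J gM -> N :=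
  fun y => h (reprM y).

Definition fstar_precomp (k : fstar J gM -> N) : M -> fpush N := fun m => k (piM m).

Lemma piR_scale_piM (a : R) (m : M) :
  piR hJ a *: (piM m : fstar J gM) = piM (a *: m).
Proof. by rewrite piMZ. Qed.

Lemma SGhom_fpush_Kset_eq0 (h : M -> fpush N) :
  @is_SGhom R M (fpush N) gM gN h -> forall x, Kset J gM x -> h x = 0.
Proof.
move=> hSG x Kx; have [_ hZ _] := hSG.
apply: (Kx _ (SGhom_kernel_SGsubmod (N := fpush N) dsM dsN hSG)).
move=> _ [a [m [Ja ->]]].
rewrite hZ; change (piR hJ a *: (h m : N) = 0).
by rewrite piR_eq0 // scale0r.
Qed.

Lemma fstar_factor_piM (h : M -> fpush N) m :
  @is_SGhom R M (fpush N) gM gN h -> fstar_factor h (piM m) = h m.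
Proof.
move=> hSG; have [hD _ _] := hSG.
apply/eqP; rewrite -subr_eq0 -(additive_funB hD); apply/eqP.
by apply: (SGhom_fpush_Kset_eq0 hSG); apply/piMP; rewrite piM_reprK.
Qed.

Lemma fstar_factor_SGhom (h : M -> fpush N) :
  @is_SGhom R M (fpush N) gM gN h ->
  is_SGhom (fstar_grading J gM) gN (fstar_factor h).
Proof.
move=> hSG; have [hD hZ hG] := hSG.
split=> [y z | a y | n _ [m [gm <-]]].
- rewrite -[y]piM_reprK -[z]piM_reprK -piMD !fstar_factor_piM //; exact: hD.
- rewrite -[y]piM_reprK -[a]piR_reprK piR_scale_piM !fstar_factor_piM //; exact: hZ.
- by rewrite fstar_factor_piM //; apply: hG.
Qed.

Lemma fstar_precomp_SGhom (k : fstar J gM -> N) :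
  is_SGhom (fstar_grading J gM) gN k ->
  @is_SGhom R M (fpush N) gM gN (fstar_precomp k).
Proof.
move=> [kD kZ kG]; split=> [x y | a x | n x gx].
- by rewrite /fstar_precomp piMD kD.
- by rewrite /fstar_precomp -piR_scale_piM kZ.
- by apply: kG; exists x.
Qed.

Lemma fstar_factorK (h : M -> fpush N) :
  @is_SGhom R M (fpush N) gM gN h -> fstar_precomp (fstar_factor h) = h.
Proof.
by move=> hSG; apply: functional_extensionality => m; apply: fstar_factor_piM.
Qed.

Lemma fstar_precompK (k : fstar J gM -> N) : fstar_factor (fstar_precomp k) = k.
Proof.
by apply: functional_extensionality => y; rewrite /fstar_factor /fstar_precomp piM_reprK.
Qed.

End FstarFactor.

Arguments fstar_factor {R J hJ M} gM {N} h _.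

Lemma fstar_factor_natural (R : pzRingType) (J : R -> Prop) (hJ : is_ideal J)
    (M M' : lmodType R) (gM : int -> M -> Prop) (gM' : int -> M' -> Prop)
    (N : lmodType (quotR hJ)) (gN : int -> N -> Prop)
    (alpha : M' -> M) (h : M -> fpush N) :
  is_dsum_of (fun _ => True) gM -> is_dsum_of (fun _ => True) gN ->
  @is_SGhom R M (fpush N) gM gN h ->
  fstar_factor gM' (h \o alpha) = fstar_factor gM h \o fstar_hom J gM' gM alpha.
Proof.
move=> dsM dsN hSG; apply: functional_extensionality => y.
by rewrite /= /fstar_hom (fstar_factor_piM dsM dsN _ hSG).
Qed.

Theorem mainTheorem7 (R : pzRingType) (gR : int -> R -> Prop) (J : R -> Prop)
    (hJ : is_SGideal gR J) :
  is_SGring gR ->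
  let hJ' := SGideal_ideal hJ in
  let Q := quotR hJ' in
  let gQ := quotR_grading hJ' gR in
  exists Phi : forall (M : lmodType R) (gM : int -> M -> Prop)
                      (N : lmodType Q) (gN : int -> N -> Prop),
                 (M -> fpush N) -> (fstar J gM -> N),
    (* bijections Hom_R(M, f_* N) ~= Hom_{R/J}(f^* M, N) *)
    (forall (M : lmodType R) (gM : int -> M -> Prop)
            (N : lmodType Q) (gN : int -> N -> Prop),
       is_SGmod gR gM -> is_SGmod gQ gN ->
       (forall h : M -> fpush N, @is_SGhom R M (fpush N) gM gN h ->
          @is_SGhom Q (fstar J gM) N (fstar_grading J gM) gN (Phi M gM N gN h)) /\
       exists Psi : (fstar J gM -> N) -> (M -> fpush N),
         [/\ forall k : fstar J gM -> N,
               @is_SGhom Q (fstar J gM) N (fstar_grading J gM) gN k ->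
               @is_SGhom R M (fpush N) gM gN (Psi k),
             forall h : M -> fpush N, @is_SGhom R M (fpush N) gM gN h ->
               Psi (Phi M gM N gN h) = h
           & forall k : fstar J gM -> N,
               @is_SGhom Q (fstar J gM) N (fstar_grading J gM) gN k ->
               Phi M gM N gN (Psi k) = k]) /\
    (* naturality in M *)
    (forall (M M' : lmodType R) (gM : int -> M -> Prop) (gM' : int -> M' -> Prop)
            (N : lmodType Q) (gN : int -> N -> Prop),
       is_SGmod gR gM -> is_SGmod gR gM' -> is_SGmod gQ gN ->
       forall alpha : M' -> M, @is_SGhom R M' M gM' gM alpha ->
       forall h : M -> fpush N, @is_SGhom R M (fpush N) gM gN h ->
         Phi M' gM' N gN (h \o alpha)
         = Phi M gM N gN h \o fstar_hom J gM' gM alpha) /\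
    (* naturality in N *)
    (forall (M : lmodType R) (gM : int -> M -> Prop)
            (N N' : lmodType Q) (gN : int -> N -> Prop) (gN' : int -> N' -> Prop),
       is_SGmod gR gM -> is_SGmod gQ gN -> is_SGmod gQ gN' ->
       forall beta : N -> N', @is_SGhom Q N N' gN gN' beta ->
       forall h : M -> fpush N, @is_SGhom R M (fpush N) gM gN h ->
         Phi M gM N' gN' ((beta : fpush N -> fpush N') \o h)
         = beta \o Phi M gM N gN h).
Proof.
move=> _ hJ' Q gQ.
exists (fun M gM N _ => @fstar_factor R J hJ' M gM N).
split; last split.
- move=> M gM N gN [dsM _] [dsN _]; split=> [h|].
    exact: fstar_factor_SGhom.
  exists (@fstar_precomp R J hJ' M gM N); split.
  + exact: fstar_precomp_SGhom.
  + exact: fstar_factorK.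
  + by move=> k _; apply: fstar_precompK.
- move=> M M' gM gM' N gN [dsM _] _ [dsN _] alpha _ h hSG.
  exact: fstar_factor_natural dsM dsN hSG.
- by [].
Qed.
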